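(* There is $\delta_0>0$ such that for every $\delta\in(0,\delta_0]$, every $s\ge s_0$ and every $X\in\mathcal X(s)$, $$X\le \alpha_1X+\sum_{l=1}^Le^{(\alpha_1-\alpha_l)s}\Psi_{i_l}\big(e^{(\alpha_l-\alpha_1)s}(X-Y_l(s))\big).$$
   Context: For a positive integer $i$, $\Psi_i:\mathbb R\to\mathbb R$ denotes the odd, strictly decreasing, analytic solution of $-\frac{1}{2i}\Psi_i+\frac{2i+1}{2i}X\Psi_i'(X)+\Psi_i(X)\Psi_i'(X)=0$ satisfying $\Psi_i(X)=-X+X^{2i+1}+O(X^{4i+1})$ as $X\to0$. It satisfies $\Psi_i(X)=-\operatorname{sgn}(X)|X|^{\frac1{2i+1}}+O(|X|^{-1+\frac{2}{2i+1}})$ as $|X|\to\infty$, and $|\Psi_i(X)|\approx |X|(1+|X|)^{\frac1{2i+1}-1}$. Fix an integer $L\ge2$ and positive integers $i_1,\dots,i_L$; let $\alpha_l=1+\frac1{2i_l}$. Let $\delta\in(0,1)$ and $s_0=-\log\delta$. For $l=1,\dots,L$ put $y_{l,0}=3(l-1)\delta^{1/(2i_1)}$, $h_l=\sum_{l'=1}^L\delta^{\frac1{2i_{l'}}}\Big(\Psi_{i_{l'}}\big(\tfrac{y_{l,0}-y_{l',0}}{\delta^{\alpha_{l'}}}\big)-\Psi_{i_{l'}}\big(\tfrac{-y_{l',0}}{\delta^{\alpha_{l'}}}\big)\Big)$, and for $s\ge s_0$ let $Y_l(s)=e^{\alpha_1 s}\big(y_{l,0}+(\delta-e^{-s})h_l\big)$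 (so $Y_1\equiv0$). Let $\mathcal X(s)=\{X\in\mathbb R: e^s\le X\le 2\delta^{1/(2i_1)}e^{\alpha_1 s}\}$. *)

From Stdlib Require Import Reals Lra.
From Coquelicot Require Import Coquelicot.
Open Scope R_scope.

Definition real_analytic (f : R -> R) : Prop :=
  forall x0 : R, exists (a : nat -> R) (r : R), 0 < r /\
    forall x, Rabs (x - x0) < r -> is_pseries a (x - x0) (f x).

Definition is_Psi (i : nat) (f : R -> R) : Prop :=
  (forall X, f (- X) = - f X) /\
  (forall x y, x < y -> f y < f x) /\
  real_analytic f /\
  (forall X, ex_derive f X /\
     - / (2 * INR i) * f X + (2 * INR i + 1) / (2 * INR i) * X * Derive f X
       + f X * Derive f X = 0) /\
  (exists C eps, 0 < eps /\ forall X, Rabs X < eps ->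
     Rabs (f X - (- X + X ^ (2 * i + 1))) <= C * Rabs X ^ (4 * i + 1)).

Definition alpha (i : nat -> nat) (l : nat) : R := 1 + / (2 * INR (i l)).

Definition y0 (i : nat -> nat) (delta : R) (l : nat) : R :=
  3 * (INR l - 1) * Rpower delta (/ (2 * INR (i 1%nat))).

Definition hh (Psi : nat -> R -> R) (L : nat) (i : nat -> nat) (delta : R)
  (l : nat) : R :=
  sum_n_m (fun l' : nat =>
    Rpower delta (/ (2 * INR (i l'))) *
    (Psi (i l') ((y0 i delta l - y0 i delta l') / Rpower delta (alpha i l'))
     - Psi (i l') ((- y0 i delta l') / Rpower delta (alpha i l')))) 1 L.

Definition Yl (Psi : nat -> R -> R) (L : nat) (i : nat -> nat) (delta : R)
  (l : nat) (s : R) : R :=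
  exp (alpha i 1 * s) *
  (y0 i delta l + (delta - exp (- s)) * hh Psi L i delta l).

Definition Xset (i : nat -> nat) (delta s X : R) : Prop :=
  exp s <= X <= 2 * Rpower delta (/ (2 * INR (i 1%nat))) * exp (alpha i 1 * s).

(* Since Y_1 = 0 the term l = 1 is Psi_{i_1}(X), and the claim reads
   -X/(2 i_1) <= Psi_{i_1}(X) + (terms l >= 2).
   - The ODE has the first integral (X + Psi(X)) / Psi(X)^(2k+1) on (0, +oo); the
     expansion of Psi at 0 makes its constant negative, which yields the growth bound
     kap |Psi(z)|^(2k+1) <= |z|.  For X >= e^s >= 1/delta large this gives
     |Psi_{i_1}(X)| <= X/(2 i_1).
   - The same growth bound, after rescaling, shows delta^alpha_l |Psi_{i_l}(w)| is at most
     delta^{1/(2 i_1)}/(2L) for |w| <= 3 L delta^{1/(2 i_1)} / delta^alpha_l and delta small.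
     Hence delta h_l >= -delta^{1/(2 i_1)}, so for l >= 2 the point Y_l(s) lies to the
     right of X(s), and Psi >= 0 on (-oo, 0] makes the terms l >= 2 nonnegative.
   The file first proves general real-analysis facts, then the properties of Psi
   (a section over one profile), then the estimates on y_{l,0}, h_l and Y_l, and
   finally the lemma. *)

From Stdlib Require Import Reals Lra Lia.
From Coquelicot Require Import Coquelicot.
Open Scope R_scope.

Lemma pow_odd_neg (y : R) (k : nat) : y < 0 -> y ^ (2 * k + 1) < 0.
Proof.
  intros Hy. rewrite pow_add, pow_1, pow_mult.
  assert (0 < (y ^ 2) ^ k) by (apply pow_lt; nra). nra.
Qed.

Lemma Rpower_pos (x y : R) : 0 < Rpower x y.
Proof. apply exp_pos. Qed.

Lemma Rpower_antitone (x a b : R) : 0 < x < 1 -> a <= b -> Rpower x b <= Rpower x a.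
Proof.
  intros Hx Hab. unfold Rpower.
  assert (ln x < 0) by (rewrite <- ln_1; apply ln_increasing; lra).
  destruct (Req_dec a b) as [->|Hne]; [lra|].
  left. apply exp_increasing. nra.
Qed.

(* The exponent gap behind the rescaling: for delta in (0,1) and theta <= 1,
   (delta^(1 + 1/(2k)))^(2k) = delta^(2k+1) <= delta^(2k theta + 1) = (delta^theta)^(2k) delta. *)
Lemma rescaled_power_le (k : nat) (theta delta : R) :
  (1 <= k)%nat -> 0 <= theta <= 1 -> 0 < delta < 1 ->
  Rpower delta (1 + / (2 * INR k)) ^ (2 * k) <= Rpower delta theta ^ (2 * k) * delta.
Proof.
  intros Hk Htheta Hdelta.
  assert (HkR : 1 <= INR k) by (apply (le_INR 1); exact Hk).
  rewrite <- !Rpower_pow by apply Rpower_pos. rewrite !Rpower_mult.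
  replace (Rpower delta (theta * INR (2 * k)) * delta)
    with (Rpower delta (theta * INR (2 * k) + 1)) by (rewrite Rpower_plus, Rpower_1; lra).
  apply Rpower_antitone; [exact Hdelta|].
  rewrite mult_INR. replace (INR 2) with 2 by (simpl; ring).
  replace ((1 + / (2 * INR k)) * (2 * INR k)) with (2 * INR k + 1) by (field; lra).
  nra.
Qed.

Lemma sum_n_m_ge_const (a : nat -> R) (c : R) (n m : nat) :
  (forall l, (n <= l <= m)%nat -> c <= a l) -> INR (S m - n) * c <= sum_n_m a n m.
Proof.
  intros Ha. rewrite <- sum_n_m_const, (sum_n_m_ext_loc a (fun l => Rmax c (a l))).
  - apply sum_n_m_le. intros l. apply Rmax_l.
  - intros l Hl. rewrite Rmax_right; [reflexivity | exact (Ha l Hl)].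
Qed.

Lemma common_threshold (Pr : nat -> R -> Prop) (L : nat) :
  (forall l x y, Pr l x -> 0 < y -> y <= x -> Pr l y) ->
  (forall l, (1 <= l <= L)%nat -> exists x, 0 < x /\ Pr l x) ->
  exists x, 0 < x /\ forall l, (1 <= l <= L)%nat -> Pr l x.
Proof.
  intros Hdown. induction L as [|L IH]; intros Hex.
  - exists 1. split; [lra | intros; lia].
  - destruct IH as [x1 [Hx1 H1]]; [intros l Hl; apply Hex; lia|].
    destruct (Hex (S L)) as [x2 [Hx2 H2]]; [lia|].
    assert (Hmin : 0 < Rmin x1 x2) by (apply Rmin_glb_lt; auto).
    exists (Rmin x1 x2). split; [exact Hmin|].
    intros l Hl. destruct (Nat.eq_dec l (S L)) as [->|Hne].
    + apply Hdown with x2; [exact H2 | exact Hmin | apply Rmin_r].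
    + apply Hdown with x1; [apply H1; lia | exact Hmin | apply Rmin_l].
Qed.

Lemma root_sublinear (n : nat) (a kap X y : R) :
  (2 <= n)%nat -> 0 < a -> 0 < kap -> 1 <= X -> a ^ n / kap < X ->
  kap * Rabs y ^ n <= X -> Rabs y <= X / a.
Proof.
  intros Hn Ha Hkap HX1 HXbig Hy.
  destruct (Rle_lt_dec (Rabs y) (X / a)) as [Hok|Hbig]; [exact Hok|exfalso].
  assert (Han : 0 < a ^ n) by (apply pow_lt; exact Ha).
  assert (Hpow : (X / a) ^ n <= Rabs y ^ n) by (apply pow_incr; split; [apply Rdiv_le_0_compat|]; lra).
  assert (Hsq : X ^ 2 <= X ^ n) by (apply Rle_pow; [lra | exact Hn]).
  assert (Hcmp : kap * X ^ 2 <= a ^ n * X).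
  { apply Rle_trans with (kap * X ^ n); [apply Rmult_le_compat_l; lra|].
    replace (kap * X ^ n) with (a ^ n * (kap * (X / a) ^ n))
      by (unfold Rdiv; rewrite Rpow_mult_distr, pow_inv; field; lra).
    apply Rmult_le_compat_l; [lra|]. apply Rle_trans with (kap * Rabs y ^ n); [|exact Hy].
    apply Rmult_le_compat_l; lra. }
  assert (kap * X <= a ^ n) by (simpl in Hcmp; nra).
  assert (a ^ n / kap * kap < X * kap) by (apply Rmult_lt_compat_r; lra).
  replace (a ^ n / kap * kap) with (a ^ n) in * by (field; lra).
  lra.
Qed.

(* The point is 2k * alpha = 2k + 1 > 2k * theta. *)
Lemma scaled_root_bound (k : nat) (kap theta C M : R) :
  (1 <= k)%nat -> 0 < kap -> 0 <= theta <= 1 -> 0 < C -> 0 < M ->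
  exists delta1, 0 < delta1 /\
    forall delta, 0 < delta < 1 -> delta <= delta1 ->
    forall u w : R, 0 <= u -> kap * u ^ (2 * k + 1) <= Rabs w ->
      Rabs w <= C * Rpower delta theta / Rpower delta (1 + / (2 * INR k)) ->
      Rpower delta (1 + / (2 * INR k)) * u <= Rpower delta theta / M.
Proof.
  intros Hk Hkap Htheta HC HM.
  set (K := C * M ^ (2 * k + 1)).
  assert (HK : 0 < K) by (apply Rmult_lt_0_compat; [lra | apply pow_lt; lra]).
  exists (kap / (2 * K)). split; [apply Rdiv_lt_0_compat; lra|].
  intros delta Hdelta Hsmall u w Hu Hgrowth Hw.
  set (P := Rpower delta (1 + / (2 * INR k))) in *.
  set (d := Rpower delta theta) in *.
  assert (HP : 0 < P) by apply Rpower_pos.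
  assert (Hd : 0 < d) by apply Rpower_pos.
  assert (HPk : P ^ (2 * k) <= d ^ (2 * k) * delta)
    by exact (rescaled_power_le k theta delta Hk Htheta Hdelta).
  assert (Hdk : 0 < d ^ (2 * k)) by (apply pow_lt; exact Hd).
  destruct (Rle_lt_dec (P * u) (d / M)) as [Hok|Hbig]; [exact Hok|exfalso].
  (* the growth bound, multiplied by P^(2k+1), against the assumed P u > d / M *)
  assert (Hupper : kap * (P * u) ^ (2 * k + 1) <= C * d * P ^ (2 * k)).
  { rewrite Rpow_mult_distr, (pow_add P), pow_1.
    apply Rmult_le_reg_r with (/ P); [apply Rinv_0_lt_compat; exact HP|].
    replace (kap * (P ^ (2 * k) * P * u ^ (2 * k + 1)) * / P)
      with (P ^ (2 * k) * (kap * u ^ (2 * k + 1))) by (field; lra).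
    replace (C * d * P ^ (2 * k) * / P) with (P ^ (2 * k) * (C * d / P)) by (field; lra).
    apply Rmult_le_compat_l; [apply pow_le; lra|]. lra. }
  assert (Hlower : d ^ (2 * k) * d <= M ^ (2 * k + 1) * (P * u) ^ (2 * k + 1)).
  { replace (d ^ (2 * k) * d) with (M ^ (2 * k + 1) * (d / M) ^ (2 * k + 1)).
    - apply Rmult_le_compat_l; [apply pow_le; lra|].
      apply pow_incr. split; [apply Rdiv_le_0_compat|]; lra.
    - rewrite <- (pow_1 d) at 3. rewrite <- pow_add.
      unfold Rdiv. rewrite Rpow_mult_distr, pow_inv.
      field. apply pow_nonzero; lra. }
  (* hence kap <= K delta, contradicting delta <= kap / (2K) *)
  assert (Hkey : kap * (d ^ (2 * k) * d) <= K * delta * (d ^ (2 * k) * d)).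
  { apply Rle_trans with (M ^ (2 * k + 1) * (kap * (P * u) ^ (2 * k + 1))).
    - replace (M ^ (2 * k + 1) * (kap * (P * u) ^ (2 * k + 1)))
        with (kap * (M ^ (2 * k + 1) * (P * u) ^ (2 * k + 1))) by ring.
      apply Rmult_le_compat_l; lra.
    - unfold K. assert (0 < M ^ (2 * k + 1)) by (apply pow_lt; lra).
      apply Rle_trans with (M ^ (2 * k + 1) * (C * d * P ^ (2 * k))); [apply Rmult_le_compat_l; lra|].
      replace (C * M ^ (2 * k + 1) * delta * (d ^ (2 * k) * d))
        with (M ^ (2 * k + 1) * (C * d * (d ^ (2 * k) * delta))) by ring.
      apply Rmult_le_compat_l; [lra|]. apply Rmult_le_compat_l; nra. }
  assert (Hkap_le : kap <= K * delta).
  { apply Rmult_le_reg_r with (d ^ (2 * k) * d); [apply Rmult_lt_0_compat; lra | lra]. }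
  assert (K * delta <= kap / 2).
  { apply Rle_trans with (K * (kap / (2 * K))); [apply Rmult_le_compat_l; lra|].
    right. field. lra. }
  lra.
Qed.

(* Derivative of the quotient (t + f t) / f t ^ (n+1); its numerator is what the
   ODE of Psi annihilates. *)
Lemma is_derive_first_integral (f : R -> R) (n : nat) (x : R) :
  ex_derive f x -> f x <> 0 ->
  is_derive (fun t => (t + f t) / f t ^ S n) x
    (((1 + Derive f x) * f x - INR (S n) * (x + f x) * Derive f x) / f x ^ S (S n)).
Proof.
  intros Hd Hf.
  assert (Hpow : f x ^ n <> 0) by (apply pow_nonzero; auto).
  auto_derive; [repeat split; auto; simpl; apply Rmult_integral_contrapositive; auto|].
  change (Derive (fun t => f t) x) with (Derive f x).
  change (match n with 0%nat => 1 | S _ => INR n + 1 end) with (INR (S n)).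
  cbn [Init.Nat.pred pow]. field. auto.
Qed.

Section PsiProperties.

Variable k : nat.
Variable f : R -> R.
Hypothesis k_pos : (1 <= k)%nat.
Hypothesis f_Psi : is_Psi k f.

(* Oddness forces Psi(0) = 0, and strict decrease then fixes the sign of Psi. *)
Lemma psi_zero : f 0 = 0.
Proof.
  destruct f_Psi as [Hodd _]. specialize (Hodd 0). rewrite Ropp_0 in Hodd. lra.
Qed.

Lemma psi_neg (X : R) : 0 < X -> f X < 0.
Proof.
  intros HX. destruct f_Psi as [_ [Hdec _]]. rewrite <- psi_zero. exact (Hdec 0 X HX).
Qed.

Lemma psi_nonneg (X : R) : X <= 0 -> 0 <= f X.
Proof.
  intros HX. destruct f_Psi as [_ [Hdec _]]. rewrite <- psi_zero.
  destruct (Req_dec X 0) as [->|HX0]; [lra|]. left; apply Hdec; lra.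
Qed.

Let first_integral (X : R) : R := (X + f X) / f X ^ (2 * k + 1).

Lemma first_integral_derive (x : R) : 0 < x -> is_derive first_integral x 0.
Proof.
  intros Hx. destruct f_Psi as [_ [_ [_ [Hode _]]]].
  destruct (Hode x) as [Hex Heq].
  assert (Hk : 1 <= INR k) by (apply (le_INR 1); exact k_pos).
  set (d := Derive f x) in *. set (y := f x) in *.
  (* the ODE, multiplied by 2k *)
  assert (Hlin : y = d * ((2 * INR k + 1) * x + 2 * INR k * y)).
  { replace (d * ((2 * INR k + 1) * x + 2 * INR k * y)) with
      (y + 2 * INR k * (- / (2 * INR k) * y + (2 * INR k + 1) / (2 * INR k) * x * d + y * d))
      by (field; lra).
    rewrite Heq. ring. }
  unfold first_integral. replace (2 * k + 1)%nat with (S (2 * k)) by lia.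
  replace 0 with (((1 + d) * y - INR (S (2 * k)) * (x + y) * d) / y ^ S (S (2 * k))).
  - apply is_derive_first_integral; [exact Hex | apply Rlt_not_eq, psi_neg, Hx].
  - rewrite S_INR, mult_INR. replace (INR 2) with 2 by (simpl; ring).
    replace ((1 + d) * y - (2 * INR k + 1) * (x + y) * d) with
      (y - d * ((2 * INR k + 1) * x + 2 * INR k * y)) by ring.
    rewrite <- Hlin. unfold Rdiv. ring.
Qed.

Lemma first_integral_constant (a b : R) :
  0 < a -> 0 < b -> first_integral a = first_integral b.
Proof.
  intros Ha Hb. assert (Hmin : 0 < Rmin a b) by (apply Rmin_glb_lt; auto).
  destruct (MVT_gen first_integral a b (fun _ => 0)) as [c [_ Hmvt]].
  - intros x Hx. apply first_integral_derive. lra.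
  - intros x Hx. apply continuity_pt_filterlim.
    apply (ex_derive_continuous first_integral). exists 0. apply first_integral_derive. lra.
  - lra.
Qed.

(* From Psi(X) = -X + X^(2k+1) + O(X^(4k+1)): X + Psi(X) > 0 at some small X > 0. *)
Lemma psi_above_minus_identity_near_zero : exists x0, 0 < x0 /\ 0 < x0 + f x0.
Proof.
  destruct f_Psi as [_ [_ [_ [_ [C [eps [Heps Hasym]]]]]]].
  assert (HC := Rabs_pos C).
  set (x0 := Rmin (eps / 2) (/ (Rabs C + 2))).
  assert (Hx0 : 0 < x0) by (apply Rmin_glb_lt; [lra | apply Rinv_0_lt_compat; lra]).
  assert (Hx0eps : x0 < eps) by (unfold x0; pose proof (Rmin_l (eps / 2) (/ (Rabs C + 2))); lra).
  assert (Hx0C : x0 * (Rabs C + 2) <= 1).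
  { unfold x0; pose proof (Rmin_r (eps / 2) (/ (Rabs C + 2))).
    replace 1 with (/ (Rabs C + 2) * (Rabs C + 2)) by (field; lra).
    apply Rmult_le_compat_r; lra. }
  exists x0; split; [exact Hx0|].
  set (q := x0 ^ (2 * k + 1)).
  assert (Hq : 0 < q) by (apply pow_lt; lra).
  assert (Hp : 0 <= x0 ^ (2 * k) <= x0).
  { replace (2 * k)%nat with (S (2 * k - 1)) by lia.
    rewrite <- tech_pow_Rmult.
    assert (0 <= x0 ^ (2 * k - 1) <= 1).
    { split; [apply pow_le; lra|]. rewrite <- (pow1 (2 * k - 1)). apply pow_incr; nra. }
    split; nra. }
  (* the remainder is dominated by the X^(2k+1) term *)
  assert (Herr : C * x0 ^ (4 * k + 1) < q).
  { replace (x0 ^ (4 * k + 1)) with (q * x0 ^ (2 * k))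
      by (unfold q; rewrite <- pow_add; f_equal; lia).
    assert (C * (q * x0 ^ (2 * k)) <= Rabs C * (q * x0)).
    { apply Rle_trans with (Rabs C * (q * x0 ^ (2 * k))).
      - apply Rmult_le_compat_r; [nra | apply Rle_abs].
      - apply Rmult_le_compat_l; nra. }
    nra. }
  specialize (Hasym x0). rewrite Rabs_pos_eq in Hasym by lra.
  apply Rabs_le_between in Hasym; [|exact Hx0eps]. fold q in Hasym. lra.
Qed.

Lemma psi_first_integral :
  exists c, c < 0 /\ forall X, 0 < X -> X + f X = c * f X ^ (2 * k + 1).
Proof.
  destruct psi_above_minus_identity_near_zero as [x0 [Hx0 Hpos]].
  exists (first_integral x0). split.
  - unfold first_integral, Rdiv.
    pose proof (Rinv_lt_0_compat _ (pow_odd_neg _ k (psi_neg x0 Hx0))). nra.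
  - intros X HX. rewrite (first_integral_constant x0 X Hx0 HX). unfold first_integral.
    field. apply pow_nonzero, Rlt_not_eq, psi_neg, HX.
Qed.

Lemma psi_root_bound :
  exists kap, 0 < kap /\ forall z, kap * Rabs (f z) ^ (2 * k + 1) <= Rabs z.
Proof.
  destruct psi_first_integral as [c [Hc Hfi]].
  exists (- c). split; [lra|].
  assert (Hpos : forall z, 0 < z -> - c * Rabs (f z) ^ (2 * k + 1) <= Rabs z).
  { intros z Hz. rewrite RPow_abs, Rabs_left by exact (pow_odd_neg _ k (psi_neg z Hz)).
    rewrite Rabs_pos_eq by lra. specialize (Hfi z Hz). pose proof (psi_neg z Hz). lra. }
  intros z. destruct (Rtotal_order z 0) as [Hz|[->|Hz]].
  - destruct f_Psi as [Hodd _].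
    rewrite <- (Ropp_involutive z), Hodd, Rabs_Ropp, (Rabs_Ropp (- z)).
    apply Hpos. lra.
  - rewrite psi_zero, Rabs_R0, pow_i by lia. lra.
  - exact (Hpos z Hz).
Qed.

End PsiProperties.

Definition spacing (i : nat -> nat) (delta : R) : R := Rpower delta (/ (2 * INR (i 1%nat))).

Lemma y0_spacing (i : nat -> nat) (delta : R) (l : nat) :
  y0 i delta l = 3 * (INR l - 1) * spacing i delta.
Proof. reflexivity. Qed.

Lemma y0_first (i : nat -> nat) (delta : R) : y0 i delta 1 = 0.
Proof. rewrite y0_spacing. simpl (INR 1). ring. Qed.

Lemma y0_diff_bound (i : nat -> nat) (delta : R) (L l l' : nat) :
  (1 <= l <= L)%nat -> (1 <= l' <= L)%nat ->
  Rabs (y0 i delta l - y0 i delta l') <= 3 * INR L * spacing i delta.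
Proof.
  intros Hl Hl'. rewrite !y0_spacing.
  assert (Hd : 0 < spacing i delta) by apply Rpower_pos.
  assert (1 <= INR l <= INR L) by (split; [apply (le_INR 1) | apply le_INR]; lia).
  assert (1 <= INR l' <= INR L) by (split; [apply (le_INR 1) | apply le_INR]; lia).
  replace (3 * (INR l - 1) * spacing i delta - 3 * (INR l' - 1) * spacing i delta)
    with ((INR l - INR l') * (3 * spacing i delta)) by ring.
  rewrite Rabs_mult, (Rabs_pos_eq (3 * _)) by lra.
  replace (3 * INR L * spacing i delta) with (INR L * (3 * spacing i delta)) by ring.
  apply Rmult_le_compat_r; [lra|]. apply Rabs_le. lra.
Qed.

Lemma Yl_first (Psi : nat -> R -> R) (L : nat) (i : nat -> nat) (delta s : R) :
  Yl Psi L i delta 1 s = 0.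
Proof.
  unfold Yl, hh. rewrite y0_first.
  rewrite (sum_n_m_ext _ (fun _ => 0)), sum_n_m_const; [ring|].
  intros l'. rewrite Rminus_0_l. rewrite Rminus_diag. apply Rmult_0_r.
Qed.

(* The rescaled profile delta^alpha_l Psi_{i_l} is small, uniformly on the window
   where the arguments of h_l live. *)
Definition small_scale_bound (Psi : nat -> R -> R) (L : nat) (i : nat -> nat)
  (delta : R) (l : nat) : Prop :=
  forall w, Rabs w <= 3 * INR L * spacing i delta / Rpower delta (alpha i l) ->
    Rpower delta (alpha i l) * Rabs (Psi (i l) w) <= spacing i delta / (2 * INR L).

Lemma small_scale_bound_eventually (Psi : nat -> R -> R) (L : nat) (i : nat -> nat) :
  (forall k, (1 <= k)%nat -> is_Psi k (Psi k)) -> (1 <= L)%nat ->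
  (forall l, (1 <= l <= L)%nat -> (1 <= i l)%nat) ->
  exists deltaB, 0 < deltaB /\ forall delta, 0 < delta < 1 -> delta <= deltaB ->
    forall l, (1 <= l <= L)%nat -> small_scale_bound Psi L i delta l.
Proof.
  intros HPsi HL Hi.
  assert (HLR : 1 <= INR L) by (apply (le_INR 1); exact HL).
  assert (Hi1R : 1 <= INR (i 1%nat)) by (apply (le_INR 1), Hi; lia).
  destruct (common_threshold (fun l x => forall delta, 0 < delta < 1 -> delta <= x ->
              small_scale_bound Psi L i delta l) L) as [deltaB [HdeltaB Hall]].
  - intros l x y Hx Hy Hyx delta Hdelta Hle. apply Hx; lra.
  - intros l Hl.
    destruct (psi_root_bound (i l) (Psi (i l)) (Hi l Hl) (HPsi _ (Hi l Hl))) as [kap [Hkap Hroot]].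
    destruct (scaled_root_bound (i l) kap (/ (2 * INR (i 1%nat))) (3 * INR L) (2 * INR L))
      as [delta1 [Hdelta1 Hscale]]; [apply Hi, Hl | exact Hkap | | lra | lra |].
    + split; [left; apply Rinv_0_lt_compat; lra|].
      rewrite <- Rinv_1. apply Rinv_le_contravar; lra.
    + exists delta1. split; [exact Hdelta1|].
      intros delta Hdelta Hle w Hw.
      exact (Hscale delta Hdelta Hle _ w (Rabs_pos _) (Hroot w) Hw).
  - exists deltaB. split; [exact HdeltaB|].
    intros delta Hdelta Hle l Hl. exact (Hall l Hl delta Hdelta Hle).
Qed.

Lemma small_scale_bound_at (Psi : nat -> R -> R) (L : nat) (i : nat -> nat)
  (delta : R) (l : nat) (a : R) :
  small_scale_bound Psi L i delta l -> Rabs a <= 3 * INR L * spacing i delta ->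
  Rpower delta (alpha i l) * Rabs (Psi (i l) (a / Rpower delta (alpha i l)))
    <= spacing i delta / (2 * INR L).
Proof.
  intros Hbound Ha. apply Hbound.
  assert (HP : 0 < Rpower delta (alpha i l)) by apply Rpower_pos.
  unfold Rdiv. rewrite Rabs_mult, Rabs_inv, (Rabs_pos_eq (Rpower _ _)) by lra.
  apply Rmult_le_compat_r; [left; apply Rinv_0_lt_compat|]; lra.
Qed.

(* delta h_l >= -delta^(1/(2 i_1)): each of the L summands of delta h_l is a
   difference of two values of a rescaled profile, each at most delta^(1/(2 i_1))/(2L). *)
Lemma delta_hh_lower (Psi : nat -> R -> R) (L : nat) (i : nat -> nat) (delta : R) (l : nat) :
  0 < delta -> (1 <= l <= L)%nat ->
  (forall l', (1 <= l' <= L)%nat -> small_scale_bound Psi L i delta l') ->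
  - spacing i delta <= delta * hh Psi L i delta l.
Proof.
  intros Hdelta Hl Hsmall.
  assert (HLR : 1 <= INR L) by (apply (le_INR 1); lia).
  unfold hh.
  rewrite <- (sum_n_m_mult_l (K := R_Ring)).
  replace (- spacing i delta) with (INR (S L - 1) * - (spacing i delta / INR L))
    by (replace (S L - 1)%nat with L by lia; field; lra).
  apply sum_n_m_ge_const. intros l' Hl'.
  set (P := Rpower delta (alpha i l')).
  assert (HP : P = delta * Rpower delta (/ (2 * INR (i l')))).
  { unfold P, alpha. rewrite Rpower_plus, Rpower_1 by lra. reflexivity. }
  assert (HA := small_scale_bound_at Psi L i delta l' _ (Hsmall l' Hl')
                  (y0_diff_bound i delta L l l' Hl Hl')).
  assert (HB := small_scale_bound_at Psi L i delta l' _ (Hsmall l' Hl')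
                  (y0_diff_bound i delta L 1 l' ltac:(lia) Hl')).
  rewrite y0_first, Rminus_0_l in HB. fold P in HA, HB.
  set (A := Psi (i l') ((y0 i delta l - y0 i delta l') / P)) in *.
  set (B := Psi (i l') (- y0 i delta l' / P)) in *.
  change (mult delta (Rpower delta (/ (2 * INR (i l'))) * (A - B)))
    with (delta * (Rpower delta (/ (2 * INR (i l'))) * (A - B))).
  rewrite <- Rmult_assoc, <- HP.
  assert (HPpos : 0 < P) by apply Rpower_pos.
  pose proof (Rle_abs (- A)). pose proof (Rle_abs B). rewrite Rabs_Ropp in *.
  assert (P * (A - B) >= - (P * Rabs A + P * Rabs B)) by nra.
  replace (spacing i delta / INR L)
    with (spacing i delta / (2 * INR L) + spacing i delta / (2 * INR L)) by (field; lra).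
  lra.
Qed.

Lemma exp_neg_le (delta s : R) : 0 < delta -> - ln delta <= s -> exp (- s) <= delta.
Proof.
  intros Hdelta Hs. rewrite <- (exp_ln delta) by exact Hdelta.
  destruct (Req_dec (- s) (ln delta)) as [->|Hne]; [lra|].
  left. apply exp_increasing. lra.
Qed.

Lemma inv_delta_le_exp (delta s : R) : 0 < delta -> - ln delta <= s -> / delta <= exp s.
Proof.
  intros Hdelta Hs. rewrite <- (Rinv_inv (exp s)), <- exp_Ropp.
  apply Rinv_le_contravar; [apply exp_pos | exact (exp_neg_le delta s Hdelta Hs)].
Qed.

Lemma X_le_Yl (Psi : nat -> R -> R) (L : nat) (i : nat -> nat) (delta s X : R) (l : nat) :
  0 < delta -> - ln delta <= s -> (2 <= l <= L)%nat ->
  (forall l', (1 <= l' <= L)%nat -> small_scale_bound Psi L i delta l') ->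
  X <= 2 * spacing i delta * exp (alpha i 1 * s) -> X <= Yl Psi L i delta l s.
Proof.
  intros Hdelta Hs Hl Hsmall HX.
  assert (Hh := delta_hh_lower Psi L i delta l Hdelta ltac:(lia) Hsmall).
  assert (He := exp_neg_le delta s Hdelta Hs).
  assert (Hepos := exp_pos (- s)).
  assert (Hd : 0 < spacing i delta) by apply Rpower_pos.
  assert (HE : 0 < exp (alpha i 1 * s)) by apply exp_pos.
  set (h := hh Psi L i delta l) in *.
  (* shrinking the prefactor from delta to delta - e^{-s} keeps the lower bound *)
  assert (Hshift : - spacing i delta <= (delta - exp (- s)) * h).
  { destruct (Rle_lt_dec 0 h); nra. }
  assert (Hy : 3 * spacing i delta <= y0 i delta l).
  { rewrite y0_spacing. assert (2 <= INR l) by (apply (le_INR 2); lia). nra. }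
  unfold Yl. fold h. nra.
Qed.

(* Hence all summands with l >= 2 are nonnegative: Psi >= 0 on (-oo, 0]. *)
Lemma tail_sum_nonneg (Psi : nat -> R -> R) (L : nat) (i : nat -> nat) (delta s X : R) :
  (forall k, (1 <= k)%nat -> is_Psi k (Psi k)) ->
  (forall l, (1 <= l <= L)%nat -> (1 <= i l)%nat) ->
  0 < delta -> - ln delta <= s ->
  (forall l', (1 <= l' <= L)%nat -> small_scale_bound Psi L i delta l') ->
  X <= 2 * spacing i delta * exp (alpha i 1 * s) ->
  0 <= sum_n_m (fun l => exp ((alpha i 1 - alpha i l) * s) *
         Psi (i l) (exp ((alpha i l - alpha i 1) * s) * (X - Yl Psi L i delta l s))) 2 L.
Proof.
  intros HPsi Hi Hdelta Hs Hsmall HX.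
  rewrite <- (Rmult_0_r (INR (S L - 2))). apply sum_n_m_ge_const. intros l Hl.
  apply Rmult_le_pos; [left; apply exp_pos|].
  apply (psi_nonneg (i l)); [apply HPsi, Hi; lia|].
  assert (X <= Yl Psi L i delta l s) by exact (X_le_Yl Psi L i delta s X l Hdelta Hs Hl Hsmall HX).
  assert (0 < exp ((alpha i l - alpha i 1) * s)) by apply exp_pos.
  nra.
Qed.

(* The l = 1 term: for X >= 1/delta with delta small, the growth bound of Psi_k gives
   Psi_k(X) >= -X/(2k). *)
Lemma psi_lower_at_large (f : R -> R) (k : nat) (kap delta X : R) :
  (1 <= k)%nat -> 0 < kap -> (forall z, kap * Rabs (f z) ^ (2 * k + 1) <= Rabs z) ->
  0 < delta < 1 -> delta <= kap / (2 * (2 * INR k) ^ (2 * k + 1)) -> / delta <= X ->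
  - (X / (2 * INR k)) <= f X.
Proof.
  intros Hk Hkap Hroot Hdelta Hle HX.
  set (a := 2 * INR k) in *.
  assert (Ha : 2 <= a) by (unfold a; assert (1 <= INR k) by (apply (le_INR 1); exact Hk); lra).
  assert (Han : 0 < a ^ (2 * k + 1)) by (apply pow_lt; lra).
  assert (HXbig : a ^ (2 * k + 1) / kap < X).
  { apply Rlt_le_trans with (/ delta); [|exact HX].
    apply Rlt_le_trans with (/ (kap / (2 * a ^ (2 * k + 1)))).
    - replace (/ (kap / (2 * a ^ (2 * k + 1)))) with (2 * (a ^ (2 * k + 1) / kap)) by (field; lra).
      assert (0 < a ^ (2 * k + 1) / kap) by (apply Rdiv_lt_0_compat; lra). lra.
    - apply Rinv_le_contravar; [lra | exact Hle]. }
  assert (HX1 : 1 <= X).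
  { apply Rle_trans with (/ delta); [|exact HX]. rewrite <- Rinv_1. apply Rinv_le_contravar; lra. }
  assert (Hbound : Rabs (f X) <= X / a).
  { apply (root_sublinear (2 * k + 1) a kap); try lra; [lia|].
    rewrite <- (Rabs_pos_eq X) at 2 by lra. apply Hroot. }
  apply Rabs_le_between in Hbound. lra.
Qed.

Theorem lemma4p5 :
  forall (Psi : nat -> R -> R),
  (forall k : nat, (1 <= k)%nat -> is_Psi k (Psi k)) ->
  forall (L : nat) (i : nat -> nat),
  (2 <= L)%nat ->
  (forall l : nat, (1 <= l <= L)%nat -> (1 <= i l)%nat) ->
  exists delta0 : R, 0 < delta0 /\
    forall delta : R, 0 < delta < 1 -> delta <= delta0 ->
    forall s : R, - ln delta <= s ->
    forall X : R, Xset i delta s X ->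
      X <= alpha i 1 * X +
        sum_n_m (fun l : nat =>
          exp ((alpha i 1 - alpha i l) * s) *
          Psi (i l) (exp ((alpha i l - alpha i 1) * s) *
                     (X - Yl Psi L i delta l s))) 1 L.
Proof.
  intros Psi HPsi L i HL Hi.
  assert (Hi1 : (1 <= i 1%nat)%nat) by (apply Hi; lia).
  assert (HiR : 1 <= INR (i 1%nat)) by (apply (le_INR 1); exact Hi1).
  destruct (psi_root_bound _ _ Hi1 (HPsi _ Hi1)) as [kap [Hkap Hroot]].
  destruct (small_scale_bound_eventually Psi L i HPsi ltac:(lia) Hi) as [deltaB [HdeltaB Hsmall]].
  set (deltaA := kap / (2 * (2 * INR (i 1%nat)) ^ (2 * i 1%nat + 1))).
  assert (HdeltaA : 0 < deltaA)
    by (apply Rdiv_lt_0_compat; [lra | apply Rmult_lt_0_compat; [lra | apply pow_lt; lra]]).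
  exists (Rmin deltaB deltaA). split; [apply Rmin_glb_lt; assumption|].
  intros delta Hdelta Hle s Hs X [HXlow HXup].
  (* the l = 1 term: Y_1 = 0 and X >= e^s >= 1/delta *)
  assert (Hfirst : - (X / (2 * INR (i 1%nat))) <= Psi (i 1%nat) X).
  { apply (psi_lower_at_large _ _ kap delta); try assumption.
    - exact (Rle_trans _ _ _ Hle (Rmin_r _ _)).
    - exact (Rle_trans _ _ _ (inv_delta_le_exp delta s ltac:(lra) Hs) HXlow). }
  assert (Htail := tail_sum_nonneg Psi L i delta s X HPsi Hi ltac:(lra) Hs
                     (Hsmall delta Hdelta (Rle_trans _ _ _ Hle (Rmin_l _ _))) HXup).
  rewrite (sum_n_m_Chasles _ 1 1 L), sum_n_n by lia.
  rewrite Yl_first, Rminus_diag, Rmult_0_l, exp_0, Rmult_1_l, Rmult_1_l, Rminus_0_r.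
  change (plus ?x ?y) with (x + y).
  replace (alpha i 1 * X) with (X + X / (2 * INR (i 1%nat))) by (unfold alpha; field; lra).
  lra.
Qed.
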